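(* Let $\succ$ be an admissible ordering on ground literals, extended to ground clauses by its multiset extension. Let $C_i = A_i \lor D_i$ ($1\le i\le n$) be ground clauses such that the atom $A_i$ is strictly $\succ$-maximal in $C_i$, and let $C=\neg A_1\lor\dots\lor\neg A_n\lor D$ be a ground clause. Consider the inference (SRes) with side premises $C_1,\dots,C_n$, main premise $C$ and conclusion $D_1\lor\dots\lor D_n\lor D$. Let $I\subseteq\{1,\dots,n\}$ be nonempty and let $C_p=\bigvee_{i\in I}D_i\lor\bigvee_{j\notin I}\neg A_j\lor D$ (the conclusion of the corresponding partial inference resolving only the literals $\neg A_i$, $i\in I$). Then for every set $N$ of ground clauses, the SRes inference above is redundant with respect to $N\cup\{C_p\}$.
   Context: An ordering $\succ$ on literals is admissible if it is well-founded and total on ground literals and liftable, $\neg A\succ A$ for every ground atom $A$, and $B\succ A$ implies $B\succ\neg A$ for ground atoms $A,B$. A literal $L$ is strictly $\succ$-maximal in a ground clause $C$ if $L\succ L'$ for every other literal occurrence $L'$ in $C$. For a set $N$ of ground clauses, a ground inference with side premises $C_1,\dots,C_n$, main premise $C$ and conclusion $E$ is redundant with respect to $N$ if there are finitely many clauses in $N$, each strictly smaller than $C$ (in the multiset extension of $\succ$), which together with $C_1,\dots,C_n$ logically entail $E$. *)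

From Stdlib Require Import List Permutation Relations Wellfounded Arith.
Import ListNotations.
Set Implicit Arguments.

Section Defs.
Variable Atom : Type.

Inductive lit : Type := Pos (a : Atom) | Neg (a : Atom).

(* Ground clauses: finite multisets of literals, represented by lists
   (order is irrelevant; all notions below are invariant under Permutation). *)
Definition clause := list lit.

Variable gt : lit -> lit -> Prop.

(* Admissible ordering on ground literals (liftability is vacuous in the ground setting). *)
Definition admissible : Prop :=
  well_founded (fun x y => gt y x) /\
  (forall x y z, gt x y -> gt y z -> gt x z) /\
  (forall x, ~ gt x x) /\
  (forall x y, x <> y -> gt x y \/ gt y x) /\
  (forall a, gt (Neg a) (Pos a)) /\
  (forall a b, gt (Pos b) (Pos a) -> gt (Pos b) (Neg a)).

Definition clause_gt (M M' : clause) : Prop :=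
  exists Z X Y : list lit,
    Permutation M (Z ++ X) /\ Permutation M' (Z ++ Y) /\ X <> [] /\
    (forall y, In y Y -> exists x, In x X /\ gt x y).

Definition lit_true (I : Atom -> bool) (l : lit) : Prop :=
  match l with Pos a => I a = true | Neg a => I a = false end.

Definition clause_true (I : Atom -> bool) (c : clause) : Prop :=
  exists l, In l c /\ lit_true I l.

Definition entails (Ps : list clause) (E : clause) : Prop :=
  forall I : Atom -> bool, (forall c, In c Ps -> clause_true I c) -> clause_true I E.

Definition redundant_inf (N : clause -> Prop) (sides : list clause) (main concl : clause) : Prop :=
  exists Ns : list clause,
    (forall c, In c Ns -> N c) /\
    (forall c, In c Ns -> clause_gt main c) /\
    entails (sides ++ Ns) concl.
End Defs.

Arguments Pos {Atom} a.
Arguments Neg {Atom} a.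

(* The partial conclusion C_p is below the main premise C in the multiset
   ordering: it arises from C by replacing each literal ~A_i (i in I) by D_i,
   and every literal of D_i is below A_i, hence below ~A_i; since I is
   nonempty, at least one literal is actually replaced. Semantically, C_p
   together with the side premises A_i \/ D_i entails the full conclusion:
   a remaining literal ~A_j that is true in C_p forces D_j through A_j \/ D_j. *)
From Stdlib Require Import List Permutation Lia.
Import ListNotations.

Lemma concat_map_partition_perm {T : Type} (P : nat -> bool) (h : nat -> list T)
  (s : list nat) :
  Permutation (concat (map h s))
    (concat (map (fun i => if P i then [] else h i) s) ++
     concat (map (fun i => if P i then h i else []) s)).
Proof.
  induction s as [|a s IH]; simpl; [constructor|].
  destruct (P a); simpl.
  - rewrite IH, !app_assoc. apply Permutation_app_tail, Permutation_app_comm.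
  - rewrite <- app_assoc. apply Permutation_app_head, IH.
Qed.

Lemma map_as_concat {T : Type} (h : nat -> T) (s : list nat) :
  map h s = concat (map (fun i => [h i]) s).
Proof. induction s; simpl; f_equal; auto. Qed.

Lemma in_concat_map {T : Type} (h : nat -> list T) (s : list nat) (x : T) :
  In x (concat (map h s)) <-> exists i, In i s /\ In x (h i).
Proof.
  rewrite in_concat; split.
  - intros [l [Hl Hx]]. apply in_map_iff in Hl as [i [<- Hi]]. eauto.
  - intros [i [Hi Hx]]. exists (h i). split; [apply in_map|]; assumption.
Qed.

Section MultisetReplacement.
Variables (Atom : Type) (gt : lit Atom -> lit Atom -> Prop).

Lemma clause_gt_replace_blocks (P : nat -> bool) (f g : nat -> clause Atom)
  (s : list nat) (D : clause Atom) :
  (exists i, In i s /\ P i = true /\ f i <> []) ->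
  (forall i, In i s -> P i = true ->
     forall y, In y (g i) -> exists x, In x (f i) /\ gt x y) ->
  clause_gt gt (concat (map f s) ++ D)
    (concat (map (fun i => if P i then g i else f i) s) ++ D).
Proof.
  intros [i0 [Hi0 [HP0 Hf0]]] Hdom.
  exists (D ++ concat (map (fun i => if P i then [] else f i) s)),
         (concat (map (fun i => if P i then f i else []) s)),
         (concat (map (fun i => if P i then g i else []) s)).
  split; [|split; [|split]].
  - rewrite Permutation_app_comm, <- app_assoc.
    apply Permutation_app_head, concat_map_partition_perm.
  - rewrite Permutation_app_comm, <- app_assoc. apply Permutation_app_head.
    rewrite (concat_map_partition_perm P (fun i => if P i then g i else f i)).
    apply Permutation_refl'. f_equal; f_equal; apply map_ext;
      intro i; destruct (P i); reflexivity.
  - destruct (f i0) as [|x0 l0] eqn:Ef; [contradiction|].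
    intro Hnil. assert (Hx0 : In x0 (concat (map (fun i => if P i then f i else []) s))).
    { apply in_concat_map. exists i0. rewrite HP0, Ef. split; [assumption|left; reflexivity]. }
    rewrite Hnil in Hx0. destruct Hx0.
  - intros y Hy. apply in_concat_map in Hy as [i [Hi Hy]].
    destruct (P i) eqn:HP; [|destruct Hy].
    destruct (Hdom i Hi HP y Hy) as [x [Hx Hxy]].
    exists x. split; [|assumption].
    apply in_concat_map. exists i. rewrite HP. split; assumption.
Qed.

End MultisetReplacement.

Section Semantics.
Variables (Atom : Type) (v : Atom -> bool).

Lemma clause_true_app (c1 c2 : clause Atom) :
  clause_true v (c1 ++ c2) <-> clause_true v c1 \/ clause_true v c2.
Proof.
  unfold clause_true; split.
  - intros [l [Hl Ht]]. apply in_app_or in Hl as [Hl|Hl]; [left|right]; eauto.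
  - intros [[l [Hl Ht]]|[l [Hl Ht]]]; exists l; split; auto using in_or_app.
Qed.

Lemma clause_true_concat_map (h : nat -> clause Atom) (s : list nat) :
  clause_true v (concat (map h s)) <-> exists i, In i s /\ clause_true v (h i).
Proof.
  unfold clause_true; split.
  - intros [l [Hl Ht]]. apply in_concat_map in Hl as [i [Hi Hl]]. eauto.
  - intros [i [Hi [l [Hl Ht]]]]. exists l. split; [apply in_concat_map; eauto|assumption].
Qed.

Lemma clause_true_resolve (a : Atom) (E : clause Atom) :
  clause_true v (Pos a :: E) -> lit_true v (Neg a) -> clause_true v E.
Proof.
  intros [l [[<-|Hl] Ht]] Hneg; simpl in *; [congruence|].
  exists l. split; assumption.
Qed.

End Semantics.

(* Indices 1..n of the paper are 0..n-1 here; I is given by a boolean predicate on indices. *)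
Theorem mainTheorem2 (Atom : Type) (gt : lit Atom -> lit Atom -> Prop)
  (Hadm : admissible gt)
  (n : nat) (A : nat -> Atom) (Ds : nat -> clause Atom) (D : clause Atom)
  (Hmax : forall i, i < n -> forall l, In l (Ds i) -> gt (Pos (A i)) l)
  (I : nat -> bool) (HI : exists i, i < n /\ I i = true)
  (N : clause Atom -> Prop) :
  let sides := map (fun i => Pos (A i) :: Ds i) (seq 0 n) in
  let C := map (fun i => Neg (A i)) (seq 0 n) ++ D in
  let concl := concat (map Ds (seq 0 n)) ++ D in
  let Cp := concat (map (fun i => if I i then Ds i else [Neg (A i)]) (seq 0 n)) ++ D in
  redundant_inf gt (fun c => N c \/ c = Cp) sides C concl.
Proof.
  intros sides C concl Cp.
  destruct Hadm as (_ & Htrans & _ & _ & Hneg_pos & _).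
  exists [Cp]. split; [|split].
  - intros c [<-|[]]. right; reflexivity.
  - intros c [<-|[]]. unfold C, Cp. rewrite map_as_concat.
    apply clause_gt_replace_blocks.
    + destruct HI as [i [Hi HIi]]. exists i.
      split; [apply in_seq; lia|split; [assumption|discriminate]].
    + intros i Hi _ y Hy. apply in_seq in Hi.
      exists (Neg (A i)). split; [left; reflexivity|].
      eapply Htrans; [apply Hneg_pos|apply Hmax; [lia|assumption]].
  - intros v Hv.
    assert (HCp : clause_true v Cp) by (apply Hv, in_or_app; right; left; reflexivity).
    unfold concl. apply clause_true_app. unfold Cp in HCp.
    apply clause_true_app in HCp as [HCp|HD]; [left|right; assumption].
    apply clause_true_concat_map in HCp as [i [Hi Hlit]].
    apply clause_true_concat_map. exists i. split; [assumption|].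
    destruct (I i); [assumption|].
    destruct Hlit as [l [[<-|[]] Ht]].
    apply (clause_true_resolve _ v (A i)); [|assumption].
    apply Hv, in_or_app. left. apply in_map_iff. eauto.
Qed.
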